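(* Let $j\in\mathbb{N}\cup\{0\}$, $M>0$. Let $\{h_n\}_{n\ge0}$ be the orthonormal Hermite polynomials with respect to $e^{-x^2}$ on $\mathbb{R}$, let $\lambda_n=2n$, $K_n^{(j,j)}(0,0)=\sum_{i=0}^n\big(h_i^{(j)}(0)\big)^2$, and for $n\ge1$ define $$\widetilde\lambda_{j+2n}=\lambda_{j+2n}+M\sum_{i=1}^n(\lambda_{j+2i}-\lambda_{j+2i-2})K_{j+2i-1}^{(j,j)}(0,0).$$ Then: if $j=2r$, $$\lim_{n\to+\infty}\frac{\widetilde\lambda_{2r+2n}}{n^{2r+3/2}}=\frac{M2^{4r+1}}{\pi(r+3/4)(2r+1/2)};$$ if $j=2r+1$, $$\lim_{n\to+\infty}\frac{\widetilde\lambda_{2r+1+2n}}{n^{2r+5/2}}=\frac{M2^{4r+3}}{\pi(r+5/4)(2r+3/2)}.$$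
   Context: Background: $\lambda_n=2n$ are the eigenvalues of the Hermite equation $-y''+2xy'=2ny$, and $\widetilde\lambda_{j+2n}$ are eigenvalues of the differential operator $\mathbf{L}$ having as eigenfunctions the polynomials orthonormal with respect to $(f,g)=\int_{\mathbb{R}} fg\,e^{-x^2}dx+Mf^{(j)}(0)g^{(j)}(0)$. *)

From HB Require Import structures.
From mathcomp Require Import all_boot all_order all_algebra.
From mathcomp Require Import all_classical all_reals all_analysis.
Set Implicit Arguments. Unset Strict Implicit. Unset Printing Implicit Defensive.
Import Order.TTheory GRing.Theory Num.Theory.
Local Open Scope ring_scope.

Fixpoint hermite_pair (R : realType) (n : nat) : {poly R} * {poly R} :=
  match n with
  | 0%N => (1, 2%:R *: 'X)
  | m.+1 => let: (a, b) := hermite_pair R m in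
            (b, 2%:R *: ('X * b) - (2 * m.+1)%:R *: a)
  end.

Definition hermiteH (R : realType) (n : nat) : {poly R} := (hermite_pair R n).1.

(* Orthonormal Hermite polynomials: h_n = H_n / sqrt(2^n n! sqrt(pi)),
   since int_R H_n^2 e^{-x^2} dx = 2^n n! sqrt(pi). *)
Definition hermite_on (R : realType) (n : nat) : {poly R} :=
  (Num.sqrt (2%:R ^+ n * (n`!)%:R * Num.sqrt (pi : R)))^-1 *: hermiteH R n.

Definition Kjj (R : realType) (j n : nat) : R :=
  \sum_(i < n.+1) (((hermite_on R i)^`(j)).[0]) ^+ 2.

Definition lambdaH (R : realType) (n : nat) : R := (2 * n)%:R.

Definition lambda_tilde (R : realType) (M : R) (j n : nat) : R :=
  lambdaH R (j + 2 * n) +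
  M * \sum_(1 <= i < n.+1)
        (lambdaH R (j + 2 * i) - lambdaH R (j + 2 * i - 2)) * Kjj R j (j + 2 * i - 1).

From HB Require Import structures.
From mathcomp Require Import all_boot all_order all_algebra.
From mathcomp Require Import all_classical all_reals all_analysis.
From mathcomp Require Import ring lra zify.
Import Order.TTheory GRing.Theory Num.Theory numFieldNormedType.Exports.
Local Open Scope classical_set_scope.
Local Open Scope ring_scope.

(* The only nonzero terms in K_n^(j,j)(0,0) are (h_(j+2k)^(j)(0))^2 =
   2^j (j+2k)^_j c_k / sqrt(pi), where c_k = prod_(i<k) (2i+1)/(2i+2), so
   K_(j+2i-1)^(j,j)(0,0) is the i-th partial sum of these terms.  Comparing the
   Wallis integrals of sin^n on [0, pi/2] gives n c_n^2 -> 1/pi.  The weights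
   w_m(i) = c_i i (i+1/2)(i+3/2)...(i+m-1/2) have increments
   (m+1/2) c_i (i+1/2)...(i+m-1/2), so Stolz-Cesaro gives
   K_(j+2i-1)^(j,j)(0,0) / w_j(i) -> 4^j / (sqrt(pi) (j+1/2)); since
   w_(j+1)(n+1) - w_(j+1)(n) = (j+3/2) w_j(n+1), a second application gives
   lambda~_(j+2n) / w_(j+1)(n) -> 4^(j+1) M / (sqrt(pi) (j+1/2) (j+3/2)), and
   w_(j+1)(n) ~ n^(j+3/2) / sqrt(pi). *)

Definition wallis_coef (R : fieldType) (k : nat) : R :=
  \prod_(i < k) ((i.*2.+1)%:R / (i.*2.+2)%:R).

Section Hermite.
Variable R : realType.
Local Notation H := (hermiteH R).
Local Notation c := (@wallis_coef R).

Lemma hermiteH0 : H 0 = 1. Proof. by []. Qed.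

Lemma hermiteH1 : H 1 = 2%:R *: 'X. Proof. by []. Qed.

Lemma hermiteHSS n : H n.+2 = 2%:R *: ('X * H n.+1) - (2 * n.+1)%:R *: H n.
Proof.
have pairE m : hermite_pair R m = (H m, H m.+1).
  by rewrite /hermiteH /=; case: (hermite_pair R m).
by rewrite /hermiteH /= pairE.
Qed.

Lemma deriv_hermiteH n : (H n.+1)^`() = (2 * n.+1)%:R *: H n.
Proof.
elim/ltn_ind: n => -[|[|n]] IH.
- by rewrite hermiteH1 derivZ derivX alg_polyC.
- rewrite hermiteHSS derivB !derivZ derivM derivX hermiteH1 derivZ derivX.
  by rewrite hermiteH0 -polyC1 derivC -!mul_polyC ?polyCM; ring.
- rewrite hermiteHSS derivB !derivZ derivM derivX mul1r !IH // hermiteHSS.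
  by rewrite -!mul_polyC ?polyCM; ring.
Qed.

Lemma derivn_hermiteH j l :
  (H l)^`(j) = if (j <= l)%N then (2 ^ j * l ^_ j)%:R *: H (l - j) else 0.
Proof.
elim: j => [|j IHj]; first by rewrite derivn0 ffactn0 muln1 expn0 scale1r subn0.
rewrite derivnS IHj; case: (ltngtP j l) => hjl.
- rewrite derivZ -(subnSK hjl) deriv_hermiteH scalerA -natrM subnSK //.
  by rewrite ffactnSr expnS mulnCA -!mulnA mulnCA mulnA.
- by rewrite deriv0.
- by rewrite hjl subnn hermiteH0 derivZ -polyC1 derivC scaler0.
Qed.

Lemma hermiteH_odd0 k : (H k.*2.+1).[0] = 0.
Proof.
elim: k => [|k IH]; first by rewrite hermiteH1 hornerZ hornerX mulr0.
rewrite doubleS hermiteHSS hornerD hornerN !hornerZ IH (mulrC 'X) hornerMX.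
by rewrite !mulr0 subr0.
Qed.

Lemma wallis_coefS k : c k.+1 = c k * ((k.*2.+1)%:R / (k.*2.+2)%:R).
Proof. by rewrite /wallis_coef big_ord_recr. Qed.

Lemma sqr_hermiteH_even0 k : (H k.*2).[0] ^+ 2 = (4 ^ k * (k.*2)`!)%:R * c k.
Proof.
elim: k => [|k IH]; first by rewrite hermiteH0 hornerE /wallis_coef big_ord0 expr1n mulr1.
rewrite doubleS hermiteHSS hornerD hornerN !hornerZ (mulrC 'X) hornerMX !mulr0.
rewrite sub0r sqrrN exprMn IH wallis_coefS !factS !natrM expnS !natrM.
by field; rewrite -natrD pnatr_eq0.
Qed.

Lemma sqrtpi_gt0 : 0 < Num.sqrt (pi : R).
Proof. by rewrite sqrtr_gt0 pi_gt0. Qed.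

Definition hermite_term (j k : nat) : R :=
  2 ^+ j / Num.sqrt pi * ((j + k.*2) ^_ j)%:R * c k.

Lemma sqr_derivn_hermite_on0 j l : ((hermite_on R l)^`(j)).[0] ^+ 2 =
  ((2 ^ j * l ^_ j)%:R) ^+ 2 * (H (l - j)).[0] ^+ 2
    / (2 ^+ l * (l`!)%:R * Num.sqrt pi) *+ (j <= l)%N.
Proof.
rewrite /hermite_on derivnZ derivn_hermiteH; case: leqP => hjl; last first.
  by rewrite scaler0 horner0 expr0n.
rewrite !hornerZ mulr1n !exprMn exprVn sqr_sqrtr; last first.
  by rewrite !mulr_ge0 ?sqrtr_ge0 // exprn_ge0.
by rewrite mulrC mulrA.
Qed.

Lemma KjjE j i : Kjj R j (j + i.*2.+1) = \sum_(k < i.+1) hermite_term j k.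
Proof.
rewrite /Kjj -addnS -doubleS; elim: i.+1 => [|{}i IH].
  rewrite addn0 big_ord0; apply: big1 => l _.
  by rewrite sqr_derivn_hermite_on0 leqNgt ltn_ord mulr0n.
rewrite doubleS !addnS !big_ord_recr /= IH -addnS !sqr_derivn_hermite_on0.
rewrite !addKn !leq_addr hermiteH_odd0 expr0n /= mulr0 mul0r mulr1n addr0.
rewrite sqr_hermiteH_even0 /hermite_term.
have -> : ((j + i.*2)`! = (j + i.*2) ^_ j * (i.*2)`!)%N.
  by rewrite -(ffact_fact (leq_addr i.*2 j)) addKn.
have -> : (4 ^ i = 2 ^ i.*2)%N by rewrite -mul2n expnM.
rewrite !natrM !natrX exprD; congr (_ + _).
field; rewrite (gt_eqF sqrtpi_gt0) !pnatr_eq0 -!lt0n ffact_gt0 leq_addr fact_gt0 /=.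
by rewrite !expf_neq0 // pnatr_eq0.
Qed.

Lemma lambda_tildeE (M : R) j n : lambda_tilde M j n =
  (2 * (j + 2 * n))%:R + M * \sum_(i < n) 4 * \sum_(k < i.+1) hermite_term j k.
Proof.
rewrite /lambda_tilde /lambdaH big_add1 /= big_mkord; congr (_ + M * _).
apply: eq_bigr => i _; rewrite -KjjE.
have -> : (j + 2 * i.+1 - 1 = j + i.*2.+1)%N by lia.
have -> : (2 * (j + 2 * i.+1) = 2 * (j + 2 * i.+1 - 2) + 4)%N by lia.
by rewrite natrD addrAC subrr add0r.
Qed.

End Hermite.

Section Wallis.
Variable R : realType.
Local Notation c := (@wallis_coef R).

(* [wallis_int n] below is the integral of sin^n over [0, pi/2], computed through
   this explicit primitive (the usual integration by parts). *)
Fixpoint sin_pow_prim (n : nat) : R -> R :=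
  match n with
  | 0 => id
  | 1 => cst 1 - cos
  | m.+2 => (- m.+2%:R^-1) *: (sin ^+ m.+1 * cos) + (m.+1%:R / m.+2%:R) *: sin_pow_prim m
  end.

Lemma is_derive_sin_pow_prim n (x : R) : is_derive x 1 (sin_pow_prim n) (sin x ^+ n).
Proof.
elim/ltn_ind: n x => -[|[|m]] IH x /=.
- by rewrite expr0; apply: is_derive_id.
- by apply: is_derive_eq; rewrite sub0r opprK expr1.
- (* [IHm] is found by the instance search of [is_derive_eq]. *)
  have IHm := IH m (ltnW (ltnSn _)) x; apply: is_derive_eq.
  rewrite exprfctE /GRing.scale /=.
  have c2 : cos x ^+ 2 = 1 - sin x ^+ 2 by rewrite -(cos2Dsin2 x) addrK.
  move: c2; set s := sin x; set cx := cos x => c2.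
  have -> : cx * (m.+1%:R * s ^+ m * cx) = m.+1%:R * s ^+ m * cx ^+ 2 by ring.
  rewrite c2 !exprSr; field; by rewrite -natrD pnatr_eq0.
Qed.

Lemma sin_pow_prim0 n : sin_pow_prim n 0 = 0.
Proof.
elim/ltn_ind: n => -[|[|m]] IH //=; rewrite !fctE /GRing.scale /= ?cos0 ?sin0 ?subrr //.
by rewrite expr0n /= mul0r mulr0 add0r IH // mulr0.
Qed.

Definition wallis_int n := sin_pow_prim n (pi / 2).

Lemma wallis_intSS m : wallis_int m.+2 = m.+1%:R / m.+2%:R * wallis_int m.
Proof. by rewrite /wallis_int /= !fctE /GRing.scale /= cos_pihalf !mulr0 add0r. Qed.

Lemma wallis_intS_le n : wallis_int n.+1 <= wallis_int n.
Proof.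
pose D := sin_pow_prim n - sin_pow_prim n.+1.
have dD x : is_derive x (1 : R) D (sin x ^+ n - sin x ^+ n.+1).
  by apply: is_deriveB; apply: is_derive_sin_pow_prim.
suff : D 0 <= D (pi / 2) by rewrite /D !fctE !sin_pow_prim0 subr0 subr_ge0.
apply: (@ger0_derive1_ndecr _ D 0 (pi / 2)) => //; last by rewrite divr_ge0 ?pi_ge0.
- move=> x; rewrite in_itv /= => /andP[x0 x1].
  rewrite derive1E (@derive_val _ _ _ _ _ _ _ (dD x)).
  rewrite exprS -{1}(mul1r (sin x ^+ n)) -mulrBl.
  have s0 : 0 < sin x by apply: sin_gt0_pihalf; rewrite x0 x1.
  by rewrite mulr_ge0 ?subr_ge0 ?sin_le1 // exprn_ge0 // ltW.
- by apply: derivable_within_continuous => x _; apply: ex_derive; exact: dD.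
Qed.

Lemma wallis_coef_gt0 k : 0 < c k.
Proof. by apply: prodr_gt0 => i _; rewrite divr_gt0 ?ltr0Sn. Qed.

Lemma wallis_int_even k : wallis_int k.*2 = pi / 2 * c k.
Proof.
elim: k => [|k IH]; first by rewrite /wallis_coef big_ord0 mulr1.
by rewrite doubleS wallis_intSS IH wallis_coefS; ring.
Qed.

Lemma wallis_int_odd k : wallis_int k.*2.+1 = ((k.*2.+1)%:R * c k)^-1.
Proof.
elim: k => [|k IH].
  by rewrite /wallis_int /wallis_coef big_ord0 /= !fctE cos_pihalf subr0 mulr1 invr1.
rewrite doubleS wallis_intSS IH wallis_coefS.
by field; rewrite (gt_eqF (wallis_coef_gt0 k)) -!natrD nat1r !pnatr_eq0.
Qed.

Lemma wallis_coef_sqr_ge k : 2 <= pi * (k.*2.+1)%:R * c k ^+ 2.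
Proof.
have := wallis_intS_le k.*2; rewrite wallis_int_even wallis_int_odd.
have ck := wallis_coef_gt0 k.
have pos : 0 < (k.*2.+1)%:R * c k by rewrite mulr_gt0 // ltr0Sn.
rewrite -[(_ * c k)^-1]div1r ler_pdivrMr //.
have -> : pi / 2 * c k * ((k.*2.+1)%:R * c k) = pi * (k.*2.+1)%:R * c k ^+ 2 / 2 by ring.
lra.
Qed.

Lemma wallis_coef_sqr_le k : pi * k%:R * c k ^+ 2 <= 1.
Proof.
case: k => [|k]; first by rewrite mulr0 mul0r ler01.
have := wallis_intS_le k.*2.+1; rewrite -doubleS wallis_int_even wallis_int_odd.
have ck := wallis_coef_gt0 k.
have pos : 0 < (k.*2.+1)%:R * c k by rewrite mulr_gt0 // ltr0Sn.
rewrite -[(_ * c k)^-1]div1r ler_pdivlMr // wallis_coefS.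
have -> : (k.*2.+2)%:R = 2 * k.+1%:R :> R by rewrite -doubleS -mul2n natrM.
suff -> : pi / 2 * (c k * ((k.*2.+1)%:R / (2 * k.+1%:R))) * ((k.*2.+1)%:R * c k) =
   pi * k.+1%:R * (c k * ((k.*2.+1)%:R / (2 * k.+1%:R))) ^+ 2 by [].
by field; rewrite ?nat1r pnatr_eq0.
Qed.

End Wallis.

Section RationalLimits.
Variable R : realType.

Lemma cvg_invn : (n%:R^-1 : R) @[n --> \oo] --> 0.
Proof.
rewrite gtr0_cvgV0; first exact: cvgr_idn.
by near=> n; rewrite ltr0n; near: n; exact: nbhs_infty_gt.
Unshelve. all: end_near.
Qed.

Lemma cvg_affine_ratio (a b c : R) :
  ((a * n%:R + b) / (n%:R + c)) @[n --> \oo] --> a.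
Proof.
have lim : ((a + b * n%:R^-1) / (1 + c * n%:R^-1)) @[n --> \oo]
    --> (a + b * 0) / (1 + c * 0).
  have lin (u v : R) : (u + v * n%:R^-1) @[n --> \oo] --> u + v * 0.
    by apply: cvgD; [exact: cvg_cst | apply: cvgMl_tmp; exact: cvg_invn].
  apply: cvgM; first exact: lin.
  by apply: cvgV; [rewrite mulr0 addr0 oner_neq0 | exact: lin].
rewrite !mulr0 !addr0 divr1 in lim.
apply: cvg_trans lim; apply: near_eq_cvg; near=> n.
have n0 : n%:R != 0 :> R by rewrite pnatr_eq0 -lt0n; near: n; exact: nbhs_infty_gt.
have nc : n%:R + c != 0.
  by rewrite gt_eqF // -ltrBlDr sub0r; near: n; exact: cvgry_gt cvgr_idn _.
by field; rewrite n0 nc.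
Unshelve. all: end_near.
Qed.

Lemma cvg_prod_affine_ratio m (a b c : nat -> R) :
  (\prod_(t < m) ((a t * n%:R + b t) / (n%:R + c t))) @[n --> \oo]
    --> \prod_(t < m) a t.
Proof. by apply: (cvg_big mul_continuous) => // t _; exact: cvg_affine_ratio. Qed.

End RationalLimits.

Section StolzCesaro.
Context {R : realType} {b : R^nat}.
Hypotheses (b_incr : forall n, b n < b n.+1) (b_cvgy : b @ \oo --> +oo).

Let db_gt0 n : 0 < b n.+1 - b n. Proof. by rewrite subr_gt0. Qed.

Lemma stolz_cesaro0 (d : R^nat) :
  (fun n => (d n.+1 - d n) / (b n.+1 - b n)) @ \oo --> 0 ->
  (fun n => d n / b n) @ \oo --> 0.
Proof.
move=> /cvgrPdist_le dd0; apply/cvgrPdist_le => e e0.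
have e2 : 0 < e / 2 by rewrite divr_gt0.
have [N _ hN] : \forall n \near \oo,
    0 <= b n /\ `|d n.+1 - d n| <= e / 2 * (b n.+1 - b n).
  near=> n; split; first by near: n; exact: cvgry_ge b_cvgy 0.
  have : `|0 - (d n.+1 - d n) / (b n.+1 - b n)| <= e / 2 by near: n; exact: dd0.
  by rewrite sub0r normrN normrM [`|(_)^-1|]gtr0_norm ?invr_gt0 // ler_pdivrMr.
have [bN0 _] := hN N (leqnn N).
have telescope k : (N <= k)%N -> `|d k - d N| <= e / 2 * (b k - b N).
  move=> Nk; rewrite -!(telescope_sumr _ Nk) mulr_sumr.
  apply: le_trans (ler_norm_sum _ _ _) _.
  by apply: ler_sum_nat => i /andP[Ni _]; case: (hN i Ni).
near=> n.
have bn0 : 0 < b n by near: n; exact: cvgry_gt b_cvgy 0.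
rewrite sub0r normrN normrM [`|(_)^-1|]gtr0_norm ?invr_gt0 // ler_pdivrMr //.
have -> : d n = (d n - d N) + d N by rewrite subrK.
apply: le_trans (ler_normD _ _) _; rewrite (splitr e) mulrDl.
apply: lerD.
  apply: le_trans (telescope n _) _; first by near: n; exact: nbhs_infty_ge.
  by rewrite ler_wpM2l ?(ltW e2) // lerBlDr lerDl.
rewrite -ler_pdivrMl //; near: n; exact: cvgry_ge b_cvgy _.
Unshelve. all: end_near.
Qed.

Lemma stolz_cesaro (a : R^nat) (l : R) :
  (fun n => (a n.+1 - a n) / (b n.+1 - b n)) @ \oo --> l ->
  (fun n => a n / b n) @ \oo --> l.
Proof.
move=> da; have : (fun n => (a n - l * b n) / b n) @ \oo --> 0.
  apply: stolz_cesaro0; rewrite -(subrr l).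
  have -> : (fun n => (a n.+1 - l * b n.+1 - (a n - l * b n)) / (b n.+1 - b n)) =
            (fun n => (a n.+1 - a n) / (b n.+1 - b n) - l).
    by apply/funext => n; field; rewrite gt_eqF ?db_gt0.
  exact: cvgB da (cvg_cst l).
move=> /cvgD /(_ (cvg_cst l)); rewrite add0r; apply: cvg_trans; apply: near_eq_cvg.
near=> n; have bn0 : b n != 0 by rewrite gt_eqF //; near: n; exact: cvgry_gt b_cvgy 0.
by rewrite !fctE mulrBl mulfK // subrK.
Unshelve. all: end_near.
Qed.

End StolzCesaro.

Definition pochhammer {R : ringType} (x : R) (m : nat) : R := \prod_(k < m) (x + k%:R).

Lemma pochhammerS {R : ringType} (x : R) m :
  pochhammer x m.+1 = x * pochhammer (x + 1) m.
Proof.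
rewrite /pochhammer big_ord_recl addr0; congr (_ * _).
by apply: eq_bigr => k _; rewrite lift0 -nat1r addrA.
Qed.

Lemma pochhammerSr {R : ringType} (x : R) m :
  pochhammer x m.+1 = pochhammer x m * (x + m%:R).
Proof. by rewrite /pochhammer big_ord_recr. Qed.

Lemma pochhammer_gt0 {R : realDomainType} (x : R) m : 0 < x -> 0 < pochhammer x m.
Proof. by move=> x0; apply: prodr_gt0 => k _; rewrite ltr_wpDr. Qed.

Lemma pochhammer_ge1 {R : realDomainType} (x : R) m : 1 <= x -> 1 <= pochhammer x m.
Proof.
move=> x1; apply: le_trans (_ : \prod_(k < m) 1 <= _); first by rewrite prodr_const expr1n.
by apply: ler_prod => k _; rewrite ler01 ler_wpDr.
Qed.

Section WallisAsymptotics.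
Variable R : realType.
Local Notation c := (@wallis_coef R).

Lemma natr_oddE i : (i.*2.+1)%:R = 2 * (i%:R + 2^-1) :> R.
Proof. by rewrite -[i.*2.+1]addn1 natrD -mul2n natrM mulrDr mulfV ?pnatr_eq0. Qed.

Lemma wallis_coefSn i : c i.+1 * i.+1%:R = c i * (i%:R + 2^-1).
Proof.
rewrite wallis_coefS -mulrA natr_oddE -doubleS -mul2n natrM.
by congr (_ * _); field; rewrite ?nat1r pnatr_eq0.
Qed.

Lemma cvg_wallis : (n%:R * c n ^+ 2) @[n --> \oo] --> pi^-1.
Proof.
have pi0 : 0 < pi :> R := pi_gt0 R.
apply: (@squeeze_cvgr _ _ _ _ (fun n => pi^-1 * ((1 * n%:R + 0) / (n%:R + 2^-1)))
  (fun=> pi^-1)); last exact: cvg_cst.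
- apply: nearW => n; rewrite mul1r addr0; apply/andP; split; last first.
    by rewrite -[X in _ <= X]mulr1 ler_pdivlMl // mulrA wallis_coef_sqr_le.
  have n2 : 0 < n%:R + 2^-1 :> R by rewrite ltr_wpDl.
  rewrite ler_pdivrMl // ler_pdivrMr //.
  have -> : pi * (n%:R * c n ^+ 2) * (n%:R + 2^-1) =
            n%:R * (pi * (n%:R + 2^-1) * c n ^+ 2) by ring.
  rewrite ler_peMr // -(ler_pM2l (ltr0n R 2)) mulr1.
  by have := wallis_coef_sqr_ge R n; rewrite natr_oddE -!mulrA mulrCA.
- by rewrite -[X in _ --> X]mulr1; apply: cvgMl_tmp; exact: cvg_affine_ratio.
Qed.

Lemma cvgy_n_wallis_coef : (n%:R * c n) @[n --> \oo] --> +oo.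
Proof.
have pi0 : 0 < pi :> R := pi_gt0 R.
rewrite -gtr0_cvgV0; last first.
  by near=> n; rewrite mulr_gt0 ?wallis_coef_gt0 // ltr0n; near: n; exact: nbhs_infty_gt.
have sqrE n : (n%:R * c n)^-1 = Num.sqrt (n%:R^-1 * (n%:R * c n ^+ 2)^-1).
  rewrite -invfM mulrA -expr2 -exprMn -exprVn sqrtr_sqr ger0_norm //.
  by rewrite invr_ge0 mulr_ge0 // ltW // wallis_coef_gt0.
suff : Num.sqrt (n%:R^-1 * (n%:R * c n ^+ 2)^-1) @[n --> \oo] --> 0.
  by apply: cvg_trans; apply: near_eq_cvg; apply: nearW => n; rewrite -sqrE.
rewrite -sqrtr0 -(mul0r (pi^-1)^-1).
apply: (continuous_cvg _ (@sqrt_continuous R _)).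
by apply: cvgM; [exact: cvg_invn | apply: cvgV; rewrite ?invr_eq0 ?gt_eqF //; exact: cvg_wallis].
Unshelve. all: end_near.
Qed.

Definition wallis_weight (m i : nat) : R := c i * i%:R * pochhammer (i%:R + 2^-1) m.

Lemma wallis_weightS m i :
  wallis_weight m i.+1 = c i * pochhammer (i%:R + 2^-1) m.+1.
Proof.
by rewrite /wallis_weight wallis_coefSn pochhammerS -mulrA -[i.+1%:R]natr1 addrAC.
Qed.

Lemma wallis_weight_diff m i : wallis_weight m i.+1 - wallis_weight m i =
  (m%:R + 2^-1) * (c i * pochhammer (i%:R + 2^-1) m).
Proof. by rewrite wallis_weightS pochhammerSr /wallis_weight; ring. Qed.

Lemma wallis_weight_gt0 m i : (0 < i)%N -> 0 < wallis_weight m i.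
Proof.
by move=> i0; rewrite !mulr_gt0 ?wallis_coef_gt0 ?pochhammer_gt0 ?ltr_wpDl ?ltr0n.
Qed.

Lemma wallis_weight_incr m i : wallis_weight m i < wallis_weight m i.+1.
Proof.
rewrite -subr_gt0 wallis_weight_diff !mulr_gt0 ?wallis_coef_gt0 ?pochhammer_gt0 //;
  exact: ltr_wpDl.
Qed.

Lemma wallis_weight_cvgy m : wallis_weight m i @[i --> \oo] --> +oo.
Proof.
apply: ger_cvgy cvgy_n_wallis_coef; near=> i.
rewrite /wallis_weight [c i * _]mulrC ler_peMr ?mulr_ge0 ?(ltW (wallis_coef_gt0 _ i)) //.
apply: pochhammer_ge1; have : 1 <= i%:R :> R.
  by rewrite ler1n; near: i; exact: nbhs_infty_gt.
lra.
Unshelve. all: end_near.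
Qed.

End WallisAsymptotics.

Section LambdaTildeAsymptotics.
Variables (R : realType) (j : nat) (M : R).
Local Notation c := (@wallis_coef R).
Local Notation W := (@wallis_weight R).
Local Notation Kpart i := (\sum_(k < i) hermite_term R j k).

Lemma hermite_term_ratio k :
  hermite_term R j k / (c k * pochhammer (k%:R + 2^-1) j) =
  2 ^+ j / Num.sqrt pi *
    \prod_(t < j) ((2 * k%:R + (j - t)%:R) / (k%:R + (t%:R + 2^-1))).
Proof.
rewrite /hermite_term /pochhammer ffact_prod natr_prod prodf_div.
have -> : \prod_(t < j) (j + k.*2 - t)%:R = \prod_(t < j) (2 * k%:R + (j - t)%:R) :> R.
  apply: eq_bigr => t _.
  by rewrite addnC -addnBA ?(ltnW (ltn_ord t)) // natrD -mul2n natrM.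
have -> : \prod_(t < j) (k%:R + 2^-1 + t%:R) = \prod_(t < j) (k%:R + (t%:R + 2^-1)) :> R.
  by apply: eq_bigr => t _; rewrite addrAC addrA.
have c0 := wallis_coef_gt0 R k.
have p0 : 0 < \prod_(t < j) (k%:R + (t%:R + 2^-1)) :> R.
  by apply: prodr_gt0 => t _; rewrite ltr_wpDl // ltr_wpDl.
by field; rewrite !gt_eqF ?sqrtpi_gt0.
Qed.

Definition Kpart_limit : R := 4 ^+ j / (Num.sqrt pi * (j%:R + 2^-1)).

Lemma cvg_Kpart_weight : (Kpart i / W j i) @[i --> \oo] --> Kpart_limit.
Proof.
apply: (stolz_cesaro (wallis_weight_incr R j) (wallis_weight_cvgy R j)).
have -> : (fun i => (Kpart i.+1 - Kpart i) / (W j i.+1 - W j i)) =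
    (fun i => (j%:R + 2^-1)^-1 * (2 ^+ j / Num.sqrt pi *
      \prod_(t < j) ((2 * i%:R + (j - t)%:R) / (i%:R + (t%:R + 2^-1))))).
  apply/funext => i; rewrite big_ord_recr /= addrAC subrr add0r.
  by rewrite wallis_weight_diff invfM mulrCA hermite_term_ratio.
have -> : Kpart_limit = (j%:R + 2^-1)^-1 * (2 ^+ j / Num.sqrt pi * \prod_(t < j) 2).
  rewrite /Kpart_limit prodr_const card_ord (_ : 4 = 2 * 2) ?exprMn; last by rewrite -natrM.
  by field; rewrite !gt_eqF ?sqrtpi_gt0 // ltr_wpDl.
do 2 apply: cvgMl_tmp.
exact: (cvg_prod_affine_ratio R j (fun=> 2) (fun t => (j - t)%:R) (fun t => t%:R + 2^-1)).
Qed.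

Lemma lambda_tilde_diff n :
  lambda_tilde M j n.+1 - lambda_tilde M j n = 4 + 4 * M * Kpart n.+1.
Proof.
rewrite !lambda_tildeE big_ord_recr /=.
have -> : (2 * (j + 2 * n.+1) = 2 * (j + 2 * n) + 4)%N by lia.
by rewrite natrD; ring.
Qed.

Lemma cvg_lambda_tilde_weight : (lambda_tilde M j n / W j.+1 n) @[n --> \oo] -->
  (j.+1%:R + 2^-1)^-1 * (4 * M * Kpart_limit).
Proof.
apply: (stolz_cesaro (wallis_weight_incr R j.+1) (wallis_weight_cvgy R j.+1)).
have -> : (fun n => (lambda_tilde M j n.+1 - lambda_tilde M j n) / (W j.+1 n.+1 - W j.+1 n))
    = (fun n => (j.+1%:R + 2^-1)^-1 *
        (4 * (W j n.+1)^-1 + 4 * M * (Kpart n.+1 / W j n.+1))).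
  apply/funext => n; rewrite lambda_tilde_diff wallis_weight_diff -wallis_weightS.
  by rewrite invfM mulrCA mulrDl mulrA.
apply: cvgMl_tmp; rewrite -[X in _ --> X]add0r -[X in X + _](mulr0 4).
apply: cvgD; apply: cvgMl_tmp; last by move: cvg_Kpart_weight; rewrite -cvg_shiftS; apply.
have W0 : \forall n \near \oo, 0 < W j n.
  by near=> n; apply: wallis_weight_gt0; near: n; exact: nbhs_infty_gt.
have /(gtr0_cvgV0 W0) := wallis_weight_cvgy R j.
by rewrite -cvg_shiftS.
Unshelve. all: end_near.
Qed.

Lemma powR_nat_add_3half (x : R) : 0 < x -> powR x (j%:R + 3 / 2) = x ^+ j.+1 * Num.sqrt x.
Proof.
move=> x0; have -> : (j%:R + 3 / 2 : R) = j.+1%:R + 2^-1 by rewrite -natr1; field.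
by rewrite powRD ?gt_eqF ?implybT // powR_mulrn ?powR12_sqrt ?ltW.
Qed.

Lemma cvg_weight_powR : (W j.+1 n / powR n%:R (j%:R + 3 / 2)) @[n --> \oo] -->
  Num.sqrt pi^-1.
Proof.
suff : (Num.sqrt (n%:R * c n ^+ 2) *
    \prod_(t < j.+1) ((1 * n%:R + (t%:R + 2^-1)) / (n%:R + 0))) @[n --> \oo] -->
    Num.sqrt pi^-1 * 1.
  rewrite mulr1; apply: cvg_trans; apply: near_eq_cvg; near=> n.
  have n0 : 0 < n%:R :> R by rewrite ltr0n; near: n; exact: nbhs_infty_gt.
  rewrite /= powR_nat_add_3half // /wallis_weight /pochhammer addr0 prodf_div prodr_const.
  rewrite card_ord sqrtrM ?ler0n // sqrtr_sqr ger0_norm ?ltW ?wallis_coef_gt0 //.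
  under eq_bigr do rewrite mul1r [_%:R + 2^-1]addrC addrA.
  have s0 : 0 < Num.sqrt n%:R :> R by rewrite sqrtr_gt0.
  have -> : c n * n%:R = c n * Num.sqrt n%:R * Num.sqrt n%:R.
    by rewrite -mulrA -expr2 sqr_sqrtr ?ler0n.
  by field; rewrite !gt_eqF ?exprn_gt0.
apply: cvgM; last first.
  have := cvg_prod_affine_ratio R j.+1 (fun=> 1) (fun t => t%:R + 2^-1) (fun=> 0).
  by rewrite prodr_const expr1n.
apply: (continuous_cvg _ (@sqrt_continuous R _)); exact: cvg_wallis.
Unshelve. all: end_near.
Qed.

Lemma cvg_lambda_tilde_powR :
  (lambda_tilde M j n / powR n%:R (j%:R + 3 / 2)) @[n --> \oo] -->
  4 ^+ j.+1 * M / (pi * (j%:R + 2^-1) * (j%:R + 3 / 2)).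
Proof.
have -> : 4 ^+ j.+1 * M / (pi * (j%:R + 2^-1) * (j%:R + 3 / 2)) =
    (j.+1%:R + 2^-1)^-1 * (4 * M * Kpart_limit) * Num.sqrt pi^-1.
  rewrite sqrtrV ?pi_ge0 // /Kpart_limit -[j.+1%:R]natr1.
  rewrite -[pi in LHS](sqr_sqrtr (pi_ge0 R)) exprS.
  by field; rewrite !gt_eqF ?sqrtpi_gt0 ?ltr_wpDl ?addr_ge0.
apply: cvg_trans (cvgM cvg_lambda_tilde_weight cvg_weight_powR).
apply: near_eq_cvg; near=> n; rewrite /= mulrA divfK // gt_eqF //.
by apply: wallis_weight_gt0; near: n; exact: nbhs_infty_gt.
Unshelve. all: end_near.
Qed.

End LambdaTildeAsymptotics.

Theorem mainTheorem7 (R : realType) (j : nat) (M : R) (hM : 0 < M) :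
  (forall r : nat, j = (2 * r)%N ->
     ((fun n : nat => lambda_tilde M j n / powR (n%:R : R) ((2 * r)%:R + 3 / 2)) : R^nat)
       @ \oo --> (M * 2%:R ^+ (4 * r + 1)
                  / (pi * (r%:R + 3 / 4) * ((2 * r)%:R + 1 / 2)) : R)) /\
  (forall r : nat, j = (2 * r + 1)%N ->
     ((fun n : nat => lambda_tilde M j n / powR (n%:R : R) ((2 * r)%:R + 5 / 2)) : R^nat)
       @ \oo --> (M * 2%:R ^+ (4 * r + 3)
                  / (pi * (r%:R + 5 / 4) * ((2 * r)%:R + 3 / 2)) : R)).
Proof.
(* The asymptotics hold for every real [M]. *)
have four : 4 = 2 ^+ 2 :> R by rewrite -natrX.
have p0 : pi != 0 :> R by rewrite gt_eqF ?pi_gt0.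
split=> r ->.
- suff -> : M * 2%:R ^+ (4 * r + 1) / (pi * (r%:R + 3 / 4) * ((2 * r)%:R + 1 / 2)) =
    4 ^+ (2 * r).+1 * M / (pi * ((2 * r)%:R + 2^-1) * ((2 * r)%:R + 3 / 2)).
    exact: cvg_lambda_tilde_powR.
  have -> : 4 ^+ (2 * r).+1 = 2 ^+ (4 * r + 1).+1 :> R.
    by rewrite four -exprM; congr (_ ^+ _); lia.
  (* [field] would unfold the definition of [pi], so abstract it first. *)
  move: (pi : R) p0 => p p0.
  by rewrite exprS natrM; field; rewrite p0 !gt_eqF // ltr_wpDl ?mulr_ge0.
- suff -> : M * 2%:R ^+ (4 * r + 3) / (pi * (r%:R + 5 / 4) * ((2 * r)%:R + 3 / 2)) =
    4 ^+ (2 * r + 1).+1 * M / (pi * ((2 * r + 1)%:R + 2^-1) * ((2 * r + 1)%:R + 3 / 2)).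
    have -> : (2 * r)%:R + 5 / 2 = (2 * r + 1)%:R + 3 / 2 :> R by rewrite natrD; field.
    exact: cvg_lambda_tilde_powR.
  have -> : 4 ^+ (2 * r + 1).+1 = 2 ^+ (4 * r + 3).+1 :> R.
    by rewrite four -exprM; congr (_ ^+ _); lia.
  move: (pi : R) p0 => p p0.
  by rewrite exprS natrD natrM; field; rewrite p0 !gt_eqF // ltr_wpDl ?mulr_ge0.
Qed.
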